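(* Let $p$ be an odd prime and $m$ a positive integer not divisible by $p$. Then for every $r\in\mathbb Z$, $$\sum_{\substack{k=1\\ k\equiv r\ (\mathrm{mod}\ m)}}^{p-1}\frac1k\equiv\frac1m\Big(B_{p-1}\Big(\Big\{\frac rm\Big\}\Big)-B_{p-1}\Big(\Big\{\frac{r-p}m\Big\}\Big)\Big)\pmod p.$$
   Context: $\{x\}$ denotes the fractional part of a real number $x$; $B_n(x)$ is the $n$th Bernoulli polynomial. Congruences modulo $p$ are between rational numbers whose denominators are prime to $p$. *)

From HB Require Import structures.
From mathcomp Require Import all_boot all_order all_algebra.
Set Implicit Arguments. Unset Strict Implicit. Unset Printing Implicit Defensive.
Import Order.TTheory GRing.Theory Num.Theory.
Local Open Scope ring_scope.

(* Bernoulli numbers B_0, ..., B_n (convention B_1 = -1/2), via the recursion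
   B_0 = 1, sum_{k=0}^{n} C(n+1,k) B_k = 0 for n >= 1. *)
Fixpoint bern_list (n : nat) : seq rat :=
  match n with
  | 0%N => [:: 1]
  | n'.+1 => let s := bern_list n' in
      rcons s (- (n'.+2%:R)^-1 * \sum_(0 <= k < n'.+1) ('C(n'.+2, k))%:R * s`_k)
  end.

Definition bernoulli (n : nat) : rat := (bern_list n)`_n.

Definition bernoulli_poly (n : nat) : {poly rat} :=
  \sum_(0 <= k < n.+1) (('C(n, k))%:R * bernoulli k) *: 'X^(n - k).

Definition fracp (x : rat) : rat := x - (Num.floor x)%:~R.

Definition rat_congr (p : nat) (a b : rat) : Prop :=
  [/\ (~~ ((p%:Z) %| denq a)%Z), (~~ ((p%:Z) %| denq b)%Z) & ((p%:Z) %| numq (a - b))%Z].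

From HB Require Import structures.
From mathcomp Require Import all_boot all_order all_algebra cyclic.
From mathcomp Require Import ring zify.
Import Order.TTheory GRing.Theory Num.Theory.
Local Open Scope ring_scope.

(* With n = p - 1, the difference equation B_n(t + 1) - B_n(t) = n t^(n-1) gives
   k^(p-2) = m^(n-1)/n * (B_n((k + m)/m) - B_n(k/m)), and k^(p-2) is 1/k mod p by
   Fermat.  Summing over k < p in the residue class of r telescopes to
   B_n(p/m + {(r-p)/m}) - B_n({r/m}), where {r/m} and {(r-p)/m} are the values of
   k/m at the unique members of the class in [0, m) and [p, p + m).  Finally
   B_n(p/m + t) = B_n(t) mod p because B_0, ..., B_(p-2) are p-integral, and
   m^(n-1)/n = -1/m mod p, again by Fermat. *)

Lemma eqz_mod_window (r : int) {m a k : nat} : (0 < m)%N -> (a <= k < a + m)%N ->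
  (k%:Z == r %[mod m%:Z])%Z = (k == a + absz ((r - a%:Z) %% m%:Z)%Z)%N.
Proof.
move=> m_gt0 k_in.
have m_neq0 : m%:Z != 0 by lia.
have s_ge0 := modz_ge0 (r - a%:Z) m_neq0.
rewrite -(eqz_modDr (- a%:Z)) (@modz_small (k%:Z - a%:Z)); last by lia.
by apply/eqP/eqP; lia.
Qed.

Lemma big_mod_window (R : nmodType) (r : int) (m a : nat) (F : nat -> R) : (0 < m)%N ->
  \sum_(a <= k < a + m | (k%:Z == r %[mod m%:Z])%Z) F k =
  F (a + absz ((r - a%:Z) %% m%:Z)%Z)%N.
Proof.
move=> m_gt0; set c := (a + absz _)%N.
have m_neq0 : m%:Z != 0 by lia.
have c_in : (a <= c < a + m)%N.
  have := modz_ge0 (r - a%:Z) m_neq0; have := @ltz_pmod (r - a%:Z) m%:Z.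
  by rewrite /c; lia.
rewrite big_nat_cond (eq_bigl (fun k => k == c)) ?big_nat1_eq ?c_in // => k.
case k_in: (a <= k < a + m)%N; first by rewrite (eqz_mod_window _ m_gt0 k_in).
by apply/esym/negbTE; apply: contraFN k_in => /eqP->.
Qed.

Lemma big_telescope_periodic (R : zmodType) (P : pred nat) (F : nat -> R) (m N : nat) :
  (0 < m)%N -> (forall k, P (k + m)%N = P k) ->
  \sum_(0 <= k < N | P k) (F (k + m)%N - F k) =
  \sum_(N <= k < N + m | P k) F k - \sum_(0 <= k < m | P k) F k.
Proof.
move=> m_gt0 P_per; elim: N => [|N IHN]; first by rewrite big_geq // add0n subrr.
rewrite big_mkcond big_nat_recr //= -big_mkcond IHN addSn.
rewrite [in RHS](big_cat_nat (n := (N + m)%N)) ?leq_addr //=; last lia.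
rewrite [\sum_(N + m <= i < _ | _) _]big_mkcond big_nat1 P_per.
rewrite big_ltn_cond; last lia.
case: (P N); rewrite ?addr0 //.
by rewrite [LHS]addrC [F N + _]addrC !addrA [_ + F N]addrAC subrK [F _ + _]addrC.
Qed.

Lemma fracp_divz (z : int) (m : nat) : (0 < m)%N ->
  fracp (z%:~R / m%:R) = ((z %% m%:Z)%Z)%:~R / m%:R.
Proof.
move=> m_gt0.
have m_neq0 : m%:Z != 0 by lia.
have m_pos : (0 : rat) < m%:R by rewrite ltr0n.
have mod_ge0 := modz_ge0 z m_neq0.
have mod_lt : ((z %% m%:Z)%Z < m%:Z) by rewrite ltz_pmod.
have split_z : z%:~R / m%:R = ((z %/ m%:Z)%Z)%:~R + ((z %% m%:Z)%Z)%:~R / m%:R :> rat.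
  by rewrite {1}(divz_eq z m%:Z) intrD intrM mulrDl mulrK ?unitfE ?lt0r_neq0.
have frac_ge0 : 0 <= ((z %% m%:Z)%Z)%:~R / m%:R :> rat by rewrite divr_ge0 ?ler0z ?ler0n.
have frac_lt1 : ((z %% m%:Z)%Z)%:~R / m%:R < 1 :> rat.
  by rewrite ltr_pdivrMr // mul1r -[m%:R]/(m%:Z%:~R) ltr_int.
rewrite /fracp split_z (@floor_def _ _ (z %/ m%:Z)%Z); first by rewrite addrAC subrr add0r.
by rewrite intrD lerDl ltrD2l frac_ge0 frac_lt1.
Qed.

Lemma size_bern_list n : size (bern_list n) = n.+1.
Proof. by elim: n => //= n IHn; rewrite size_rcons IHn. Qed.

Lemma nth_bern_list n k : (k <= n)%N -> (bern_list n)`_k = bernoulli k.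
Proof.
elim: n => [|n IHn]; first by rewrite leqn0 => /eqP->.
rewrite leq_eqVlt => /predU1P[->//|]; rewrite ltnS => k_le_n.
by rewrite /= nth_rcons size_bern_list ltnS k_le_n IHn.
Qed.

Lemma bernoulliS n : bernoulli n.+1 =
  - (n.+2%:R)^-1 * \sum_(0 <= k < n.+1) 'C(n.+2, k)%:R * bernoulli k.
Proof.
rewrite /bernoulli /= nth_rcons size_bern_list ltnn eqxx; congr (_ * _).
by apply: eq_big_nat => k /andP[_ k_le_n]; rewrite nth_bern_list.
Qed.

Lemma sum_bernoulli N : \sum_(0 <= k < N) 'C(N, k)%:R * bernoulli k = (N == 1)%:R.
Proof.
case: N => [|[|n]]; first by rewrite big_geq.
  by rewrite big_nat1 bin0 mulr1.
rewrite big_nat_recr //= bernoulliS binSn mulrA mulrN mulfV ?pnatr_eq0 //.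
by rewrite mulN1r subrr.
Qed.

Lemma ffactD n k j : (n ^_ (k + j) = n ^_ k * (n - k) ^_ j)%N.
Proof.
elim: j => [|j IHj]; first by rewrite addn0 ffactn0 muln1.
by rewrite addnS !ffactnSr IHj subnDA mulnA.
Qed.

Lemma bin_swap n k j : ('C(n, k) * 'C(n - k, j) = 'C(n, j) * 'C(n - j, k))%N.
Proof.
apply/eqP; rewrite -(@eqn_pmul2r (k`! * j`!)) ?muln_gt0 ?fact_gt0 //.
rewrite mulnACA !bin_ffact -ffactD [(k`! * _)%N]mulnC mulnACA !bin_ffact -ffactD.
by rewrite addnC.
Qed.

Lemma horner_bernoulli_poly n x : (bernoulli_poly n).[x] =
  \sum_(0 <= k < n.+1) 'C(n, k)%:R * bernoulli k * x ^+ (n - k).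
Proof.
rewrite horner_sum; apply: eq_bigr => k _.
by rewrite hornerZ hornerXn.
Qed.

Lemma horner_bernoulli_poly_rev n x : (bernoulli_poly n).[x] =
  \sum_(0 <= j < n.+1) 'C(n, j)%:R * bernoulli (n - j) * x ^+ j.
Proof.
rewrite horner_bernoulli_poly big_nat_rev; apply: eq_big_nat => j /andP[_ j_le_n].
by rewrite add0n subSS subKn // bin_sub.
Qed.

Lemma sum_bin_widen (R : pzSemiRingType) (F : nat -> R) N M : (N <= M)%N ->
  \sum_(0 <= k < M.+1) 'C(N, k)%:R * F k = \sum_(0 <= k < N.+1) 'C(N, k)%:R * F k.
Proof.
move=> N_le_M; rewrite (big_cat_nat (n := N.+1)) //= [X in _ + X]big1_seq ?addr0 //.
by move=> k /andP[_]; rewrite mem_index_iota => /andP[N_lt_k _]; rewrite bin_small // mul0r.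
Qed.

Lemma exprD1n_nat (R : comPzSemiRingType) (x : R) N :
  (x + 1) ^+ N = \sum_(0 <= i < N.+1) 'C(N, i)%:R * x ^+ i.
Proof. by rewrite exprD1n big_mkord; apply: eq_bigr => i _; rewrite mulr_natl. Qed.

Lemma sum_bernoulli_upto N : \sum_(0 <= k < N.+1) 'C(N, k)%:R * bernoulli k =
  bernoulli N + (N == 1)%N%:R.
Proof. by rewrite big_nat_recr //= sum_bernoulli binn mul1r addrC. Qed.

Lemma horner_bernoulli_poly_add1 n x : (bernoulli_poly n).[x + 1] =
  \sum_(0 <= j < n.+1) 'C(n, j)%:R * (bernoulli (n - j) + (n - j == 1)%N%:R) * x ^+ j.
Proof.
rewrite horner_bernoulli_poly.
under eq_big_nat => k /andP[_ k_le_n].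
  rewrite exprD1n_nat -(@sum_bin_widen _ _ (n - k) n) ?leq_subr // big_distrr.
over.
rewrite /= exchange_big_nat /=; apply: eq_big_nat => j /andP[_ j_le_n].
rewrite -sum_bernoulli_upto -(@sum_bin_widen _ _ (n - j) n) ?leq_subr //.
rewrite big_distrr big_distrl; apply: eq_big_nat => k _ /=.
have := congr1 (GRing.natmul (1 : rat)) (bin_swap n k j); rewrite !natrM => swap.
transitivity ('C(n, k)%:R * 'C(n - k, j)%:R * bernoulli k * x ^+ j); first by ring.
by rewrite swap; ring.
Qed.

Lemma bernoulli_polyD1 n x : (0 < n)%N ->
  (bernoulli_poly n).[x + 1] - (bernoulli_poly n).[x] = n%:R * x ^+ n.-1.
Proof.
case: n => // n _; rewrite horner_bernoulli_poly_add1 horner_bernoulli_poly_rev -sumrB.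
transitivity (\sum_(0 <= j < n.+2 | j == n) 'C(n.+1, j)%:R * x ^+ j).
  rewrite [RHS]big_mkcond; apply: eq_big_nat => j /andP[_ j_le] /=.
  have -> : (n.+1 - j == 1)%N = (j == n) by apply/eqP/eqP; lia.
  by case: (j == n) => /=; ring.
by rewrite big_nat1_eq leq0n ltnW //= binSn.
Qed.

Lemma numq_frac_cross (u v : int) : v != 0 ->
  numq (u%:~R / v%:~R : rat) * v = u * denq (u%:~R / v%:~R : rat).
Proof.
move=> v_neq0; apply: (@intr_inj rat); rewrite !intrM numqE mulrAC mulfVK //.
by rewrite intr_eq0.
Qed.

Lemma denq_frac_dvdz (u v : int) : v != 0 -> (denq (u%:~R / v%:~R : rat) %| v)%Z.
Proof.
move=> v_neq0; set x := (u%:~R / v%:~R : rat).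
have cop : coprimez (denq x) (numq x) by rewrite coprimez_sym coprimezE coprime_num_den.
by rewrite -(Gauss_dvdzr v cop) numq_frac_cross // dvdz_mull.
Qed.

Lemma numq_denq_mulE (x y : rat) :
  x * y = (numq x * numq y)%:~R / (denq x * denq y)%:~R.
Proof. by rewrite !intrM invfM mulrACA !divq_num_den. Qed.

Lemma numq_denq_subE (x y : rat) :
  x - y = (numq x * denq y - numq y * denq x)%:~R / (denq x * denq y)%:~R.
Proof.
rewrite -{1}(divq_num_den x) -{1}(divq_num_den y) intrB !intrM.
by field; rewrite !intr_eq0 !denq_neq0.
Qed.

(* Coprimality with p, rather than non-divisibility by p, keeps these predicates
   closed under the ring operations for every p, prime or not. *)
Definition pintegral_subdef (p : nat) (x : rat) := coprimez p%:Z (denq x).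
Definition pintegral (p : nat) : qualifier 1 rat := [qualify a x | pintegral_subdef p x].

Definition pmultiple_subdef (p : nat) (x : rat) :=
  (x \is a pintegral p) && (p%:Z %| numq x)%Z.
Definition pmultiple (p : nat) : qualifier 1 rat := [qualify a x | pmultiple_subdef p x].

Section PIntegral.
Context {p : nat}.

Local Notation pintegral := (pintegral p).
Local Notation pmultiple := (pmultiple p).

Lemma pintegralE (x : rat) : (x \is a pintegral) = coprimez p%:Z (denq x).
Proof. by []. Qed.

Lemma pintegral_frac (u v : int) : coprimez p v -> u%:~R / v%:~R \is a pintegral.
Proof.
have [->|v_neq0] := eqVneq v 0.
  by rewrite mulr0z invr0 mulr0 => _; rewrite pintegralE coprimezE coprimen1.
rewrite pintegralE !coprimezE => /coprime_dvdr; apply.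
by rewrite -dvdzE denq_frac_dvdz.
Qed.

Lemma pmultiple_frac (u v : int) : (p%:Z %| u)%Z -> coprimez p v ->
  u%:~R / v%:~R \is a pmultiple.
Proof.
move=> p_dvd_u p_cop_v; rewrite qualifE /pmultiple_subdef pintegral_frac //=.
have [->|v_neq0] := eqVneq v 0; first by rewrite mulr0z invr0 mulr0 dvdz0.
by rewrite -(Gauss_dvdzl _ p_cop_v) numq_frac_cross // dvdz_mulr.
Qed.

Lemma pmultiple_pintegral : {subset pmultiple <= pintegral}.
Proof. by move=> x /andP[]. Qed.

Fact pintegral_subring_closed : subring_closed pintegral.
Proof.
split=> [|x y x_int y_int|x y x_int y_int]; first by rewrite pintegralE coprimezE coprimen1.
  by rewrite numq_denq_subE pintegral_frac // coprimezMr -!pintegralE x_int.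
by rewrite numq_denq_mulE pintegral_frac // coprimezMr -!pintegralE x_int.
Qed.

HB.instance Definition _ :=
  GRing.isSubringClosed.Build rat (pintegral_subdef p) pintegral_subring_closed.

Fact pmultiple_zmod_closed : zmod_closed pmultiple.
Proof.
split=> [|x y /andP[x_int x_num] /andP[y_int y_num]].
  by rewrite qualifE /pmultiple_subdef rpred0 /= dvdz0.
by rewrite numq_denq_subE pmultiple_frac ?rpredB ?dvdz_mulr // coprimezMr -!pintegralE x_int.
Qed.

HB.instance Definition _ :=
  GRing.isZmodClosed.Build rat (pmultiple_subdef p) pmultiple_zmod_closed.

Lemma pmultipleMl {x y : rat} : x \is a pintegral -> y \is a pmultiple ->
  x * y \is a pmultiple.
Proof.
move=> x_int /andP[y_int y_num].
by rewrite numq_denq_mulE pmultiple_frac ?dvdz_mull // coprimezMr -!pintegralE x_int.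
Qed.

Lemma pmultipleMr {x y : rat} : x \is a pmultiple -> y \is a pintegral ->
  x * y \is a pmultiple.
Proof. by rewrite mulrC => /[swap]; apply: pmultipleMl. Qed.

Lemma hornerB_pintegral_factor (P : {poly rat}) (y z : rat) :
  (forall i, (0 < i)%N -> P`_i \is a pintegral) ->
  y \is a pintegral -> z \is a pintegral ->
  exists2 c, c \is a pintegral & P.[y] - P.[z] = (y - z) * c.
Proof.
move=> P_int y_int z_int.
exists (\sum_(i < size P) P`_i * \sum_(j < i) y ^+ (i.-1 - j) * z ^+ j).
  rewrite rpred_sum // => -[[|i] _] /=; first by rewrite big_ord0 mulr0 rpred0.
  by rewrite rpredM ?P_int // rpred_sum // => j _; rewrite rpredM ?rpredX.
rewrite !horner_coef -sumrB mulr_sumr; apply: eq_bigr => i _.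
by rewrite -mulrBr subrXX mulrCA.
Qed.

End PIntegral.

Lemma telescope_mod_window (G : rat -> rat) (m N : nat) (r : int) : (0 < m)%N ->
  \sum_(0 <= k < N | (k%:Z == r %[mod m%:Z])%Z)
     (G ((k + m)%N%:R / m%:R) - G (k%:R / m%:R)) =
  G (N%:R / m%:R + fracp ((r - N%:Z)%:~R / m%:R)) - G (fracp (r%:~R / m%:R)).
Proof.
move=> m_gt0; have m_neq0 : m%:Z != 0 by lia.
rewrite (@big_telescope_periodic _ _ (fun k => G (k%:R / m%:R))) //; last first.
  by move=> k; rewrite PoszD modzDr.
rewrite big_mod_window // -[X in \sum_(0 <= k < X | _) _]add0n big_mod_window //.
rewrite !fracp_divz // subr0 add0n natrD mulrDl.
by rewrite !natr_absz !ger0_norm ?modz_ge0.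
Qed.

Lemma bernoulli_polyD_scaled n m k : (0 < n)%N -> (0 < m)%N ->
  m%:R ^+ n.-1 / n%:R *
    ((bernoulli_poly n).[(k + m)%N%:R / m%:R] - (bernoulli_poly n).[k%:R / m%:R]) =
  k%:R ^+ n.-1.
Proof.
move=> n_gt0 m_gt0; have m_neq0 : (m%:R : rat) != 0 by rewrite pnatr_eq0 -lt0n.
rewrite natrD mulrDl divff // bernoulli_polyD1 // expr_div_n.
by field; rewrite pnatr_eq0 -lt0n n_gt0 expf_neq0.
Qed.

Section PrimeModulus.
Context {p : nat}.
Hypothesis p_prime : prime p.

Local Notation pintegral := (pintegral p).
Local Notation pmultiple := (pmultiple p).

Lemma coprimez_prime_nat k : coprimez p k%:Z = ~~ (p %| k)%N.
Proof. by rewrite coprimezE prime_coprime. Qed.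

Lemma pintegral_invn k : ~~ (p %| k)%N -> (k%:R)^-1 \is a pintegral.
Proof.
rewrite -coprimez_prime_nat => p_cop_k.
by have := @pintegral_frac p 1 k p_cop_k; rewrite mul1r.
Qed.

Lemma pintegral_bernoulli k : (k.+1 < p)%N -> bernoulli k \is a pintegral.
Proof.
elim/ltn_ind: k => -[_ _|k IHk k_lt]; first by rewrite rpred1.
rewrite bernoulliS rpredM ?rpredN ?pintegral_invn //.
  by apply/negP => /dvdn_leq; lia.
rewrite big_nat_cond rpred_sum // => j /andP[/andP[_ j_le] _].
by rewrite rpredM ?rpred_nat ?IHk //; lia.
Qed.

Lemma coef_bernoulli_poly_pintegral n i : (n < p)%N -> (0 < i)%N ->
  (bernoulli_poly n)`_i \is a pintegral.
Proof.
move=> n_lt_p i_gt0; rewrite coef_sum rpred_sum // => k _.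
rewrite coefZ coefXn; case: eqP => [i_eq|_]; last by rewrite mulr0 rpred0.
by rewrite mulr1 rpredM ?rpred_nat ?pintegral_bernoulli //; lia.
Qed.

Lemma bernoulli_polyB_factor {n} {y z : rat} : (n < p)%N ->
  y \is a pintegral -> z \is a pintegral ->
  exists2 c, c \is a pintegral &
    (bernoulli_poly n).[y] - (bernoulli_poly n).[z] = (y - z) * c.
Proof.
move=> n_lt_p; apply: hornerB_pintegral_factor => i.
exact: coef_bernoulli_poly_pintegral.
Qed.

Lemma fermat_dvdz k : ~~ (p %| k)%N -> (p%:Z %| k%:Z ^+ p.-1 - 1)%Z.
Proof.
move=> p_ndvd_k; have cop : coprime k p by rewrite coprime_sym prime_coprime.
have := Euler_exp_totient cop; rewrite totient_prime // => fermat.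
by rewrite -eqz_mod_dvd -natz -natrX natz !modz_nat fermat.
Qed.

Lemma pmultiple_invn_subX k : (2 < p)%N -> (k < p)%N ->
  (k%:R)^-1 - k%:R ^+ p.-2 \is a pmultiple.
Proof.
move=> p_gt2 k_lt_p; have [->|k_gt0] := posnP k.
  (* 0^-1 = 0 in rat, and 0 ^+ p.-2 = 0 since p > 2 *)
  by rewrite invr0 expr0n (_ : p.-2 == 0%N = false) ?subrr ?rpred0 //; lia.
have p_ndvd_k : ~~ (p %| k)%N by apply/negP => /dvdn_leq; lia.
have -> : (k%:R)^-1 - k%:R ^+ p.-2 = (1 - k%:Z ^+ p.-1)%:~R / k%:Z%:~R :> rat.
  have -> : p.-1 = p.-2.+1 by lia.
  by rewrite intrB rmorphXn /= exprS; field; rewrite pnatr_eq0 -lt0n.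
by rewrite pmultiple_frac ?coprimez_prime_nat // -opprB rpredN fermat_dvdz.
Qed.

Lemma rat_congrP a b : a - b \is a pmultiple -> b \is a pintegral -> rat_congr p a b.
Proof.
have pintegral_ndvd x : (x \is a pintegral) = ~~ (p%:Z %| denq x)%Z.
  by rewrite pintegralE coprimezE prime_coprime // dvdzE.
move=> /andP[ab_int ab_num] b_int; split; rewrite -?pintegral_ndvd //.
by rewrite -[a](subrK b) rpredD.
Qed.

Lemma fermat_scale_pmultiple m : ~~ (p %| m)%N ->
  m%:R ^+ p.-2 / p.-1%:R + (m%:R)^-1 \is a pmultiple.
Proof.
move=> p_ndvd_m; have m_gt0 : (0 < m)%N by rewrite lt0n; apply: contraNneq p_ndvd_m => ->.
have p_gt1 := prime_gt1 p_prime.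
have -> : m%:R ^+ p.-2 / p.-1%:R + (m%:R)^-1 =
    (m%:Z ^+ p.-1 - 1 + p%:Z)%:~R / (p.-1%:Z * m%:Z)%:~R :> rat.
  have [j ->] : exists j, p = j.+2 by exists p.-2; lia.
  rewrite /= intrD intrB rmorphXn intrM /= -!pmulrn exprS.
  by field; rewrite nat1r !pnatr_eq0 -!lt0n m_gt0.
rewrite pmultiple_frac //; first by rewrite rpredD ?dvdzz ?fermat_dvdz.
rewrite coprimezMr !coprimez_prime_nat p_ndvd_m andbT.
by apply/negP => /dvdn_leq; lia.
Qed.

Lemma harmonic_window_pmultiple m (r : int) : (2 < p)%N -> (0 < m)%N ->
  \sum_(1 <= k < p | (k%:Z == r %[mod m%:Z])%Z) (k%:R)^-1
  - m%:R ^+ p.-2 / p.-1%:R *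
    ((bernoulli_poly p.-1).[p%:R / m%:R + fracp ((r - p%:Z)%:~R / m%:R)]
     - (bernoulli_poly p.-1).[fracp (r%:~R / m%:R)])
  \is a pmultiple.
Proof.
move=> p_gt2 m_gt0.
have -> : \sum_(1 <= k < p | (k%:Z == r %[mod m%:Z])%Z) (k%:R : rat)^-1 =
    \sum_(0 <= k < p | (k%:Z == r %[mod m%:Z])%Z) (k%:R)^-1.
  by rewrite [RHS](big_ltn_cond (m := 0)) ?prime_gt0 //= invr0 add0r if_same.
rewrite -(@telescope_mod_window (horner _) m p r m_gt0) mulr_sumr -sumrB.
rewrite big_nat_cond rpred_sum // => k /andP[/andP[_ k_lt_p] _].
by rewrite bernoulli_polyD_scaled ?pmultiple_invn_subX //; lia.
Qed.

End PrimeModulus.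

Theorem theorem2p1 (p m : nat) (r : int) :
  prime p -> odd p -> (0 < m)%N -> ~~ (p %| m)%N ->
  rat_congr p
    (\sum_(1 <= k < p | ((k%:Z) == r %[mod m%:Z])%Z) (k%:R : rat)^-1)
    ((m%:R)^-1 * ((bernoulli_poly p.-1).[fracp (r%:~R / m%:R)]
                  - (bernoulli_poly p.-1).[fracp ((r - p%:Z)%:~R / m%:R)])).
Proof.
move=> p_prime p_odd m_gt0 p_ndvd_m.
have p_gt2 : (2 < p)%N.
  by move: p_odd; have := prime_gt1 p_prime; rewrite leq_eqVlt => /predU1P[<-|].
have n_lt_p : (p.-1 < p)%N by rewrite prednK ?prime_gt0.
set B := bernoulli_poly p.-1; set x := fracp _; set y := fracp _.
set S := \sum_(1 <= k < p | _) _; set K : rat := m%:R ^+ p.-2 / p.-1%:R.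
have p_cop_m : coprimez p m by rewrite coprimez_prime_nat.
have frac_int z : z%:~R / m%:R \is a pintegral p := pintegral_frac z m p_cop_m.
have [x_int y_int] : x \is a pintegral p /\ y \is a pintegral p.
  by rewrite /x /y !fracp_divz // !frac_int.
have p_div_m : p%:R / m%:R \is a pmultiple p := pmultiple_frac p m (dvdzz _) p_cop_m.
have [c c_int B_shift] := bernoulli_polyB_factor p_prime n_lt_p
  (rpredD (pmultiple_pintegral _ p_div_m) y_int) y_int.
have [d d_int B_yx] := bernoulli_polyB_factor p_prime n_lt_p y_int x_int.
apply: rat_congrP => //; last first.
  by rewrite rpredM ?pintegral_invn // -opprB B_yx rpredN rpredM ?(rpredB y_int x_int).
(* Each summand is 0 mod p: by telescoping, because p/m is, and because
   K = -1/m mod p. *)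
have -> : S - m%:R^-1 * (B.[x] - B.[y]) = S - K * (B.[p%:R / m%:R + y] - B.[x])
   + K * (B.[p%:R / m%:R + y] - B.[y]) + (K + m%:R^-1) * (B.[y] - B.[x]) by ring.
have K_int : K \is a pintegral p.
  by rewrite rpredM ?rpredX ?rpred_nat ?pintegral_invn //; apply/negP => /dvdn_leq; lia.
have telescoped := harmonic_window_pmultiple p_prime m r p_gt2 m_gt0.
have shifted := pmultipleMl K_int (pmultipleMr p_div_m c_int).
have rescaled := pmultipleMr (fermat_scale_pmultiple p_prime m p_ndvd_m)
  (rpredM (rpredB y_int x_int) d_int).
by rewrite B_shift B_yx addrK (rpredD (rpredD telescoped shifted) rescaled).
Qed.
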